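(* Let $F$ be a field of characteristic different from $2$ and $3$, let $A$ be the free associative $F$-algebra without unity on free generators $x,y$, let $I$ be the two-sided ideal of $A$ generated by the following elements: (i) all monomials of degree $8$; (ii) all monomials of degree greater than $2$ in $x$; (iii) all monic monomials of degree $7$ except $yxy^3xy$ and $y^2xyxy^2$; (iv) all monic monomials of degree less than $7$ which do not divide either of the monomials $yxy^3xy$ and $y^2xyxy^2$; (v) the polynomial $2xy^3xy-5yxyxy^2-2yxy^3x+5y^2xyxy$; (vi) the polynomial $2yxy^3xy-5y^2xyxy^2$; and let $B=A/I$. Then the Lie algebra $[B]$ is $5$-Engel, but the adjoint group $B^\circ$ is not a $5$-Engel group.
   Context: For monic monomials $m,n$ in $x,y$, $m$ divides $n$ if $n=m_1 m m_2$ for some monic monomials $m_1,m_2$ (possibly empty, i.e. equal to $1$). For an associative algebra $B$ (possibly without unity), $[B]$ denotes the Lie algebra with bracket $[a,b]=ab-ba$. The adjoint multiplication on $B$ is $u\circ v=u+v+uv$; $(B,\circ)$ is a monoid with identity $0$, and its group of units is the adjoint group $B^\circ$ (here $B^8=0$, so $B^\circ=B$). Set $[x,{}_{(1)}y]=[x,y]$, $[x,{}_{(k+1)}y]=[[x,{}_{(k)}y],y]$; a Lie algebra $L$ is $n$-Engel if $[u,{}_{(n)}v]=0$ for all $u,v\in L$. For a group, $(x,y)=x^{-1}y^{-1}xy$, $(x,{}_{(k+1)}y)=((x,{}_{(k)}y),y)$; a group $G$ is $n$-Engel if $(u,{}_{(n)}v)=1$ for all $u,v\in G$. *)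

From HB Require Import structures.
From mathcomp Require Import all_boot all_order all_algebra.
Set Implicit Arguments.
Unset Strict Implicit.
Unset Printing Implicit Defensive.
Import GRing.Theory.
Local Open Scope ring_scope.

(* Words in the free monoid on {x, y}: x is encoded by [false], y by [true].
   Monic monomials of the free non-unital algebra = nonempty words. *)
Notation word := (seq bool).
Definition lx : bool := false.
Definition ly : bool := true.

Section FreeAlg.
Variable F : fieldType.

Definition ncs := word -> F.

Definition ncs_add (p q : ncs) : ncs := fun w => p w + q w.
Definition ncs_opp (p : ncs) : ncs := fun w => - p w.
Definition ncs_scale (a : F) (p : ncs) : ncs := fun w => a * p w.
Definition ncs_zero : ncs := fun _ => 0.
Definition ncs_mul (p q : ncs) : ncs :=
  fun w => \sum_(i < (size w).+1) p (take i w) * q (drop i w).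
Definition ncs_sub (p q : ncs) : ncs := ncs_add p (ncs_opp q).

Definition mono (m : word) : ncs := fun w => (w == m)%:R.

(* Elements of the free associative algebra WITHOUT unity A = F<x,y>_+ :
   finitely supported (equivalently, bounded degree) with zero constant term. *)
Definition in_A (p : ncs) : Prop :=
  p [::] = 0 /\ exists n : nat, forall w : word, (n <= size w)%N -> p w = 0.

Inductive in_ideal (S : ncs -> Prop) : ncs -> Prop :=
  | ideal_gen s : S s -> in_ideal S s
  | ideal_zero : in_ideal S ncs_zero
  | ideal_add p q : in_ideal S p -> in_ideal S q -> in_ideal S (ncs_add p q)
  | ideal_scale a p : in_ideal S p -> in_ideal S (ncs_scale a p)
  | ideal_mull a p : in_A a -> in_ideal S p -> in_ideal S (ncs_mul a p)
  | ideal_mulr p a : in_A a -> in_ideal S p -> in_ideal S (ncs_mul p a).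

Definition mdivides (m n : word) : Prop := exists m1 m2, n = m1 ++ m ++ m2.

Definition w1 : word := [:: ly; lx; ly; ly; ly; lx; ly].
Definition w2 : word := [:: ly; ly; lx; ly; lx; ly; ly].

Definition gen_v : ncs :=
  ncs_add (ncs_add (ncs_scale 2 (mono [:: lx; ly; ly; ly; lx; ly]))
                   (ncs_scale (-5) (mono [:: ly; lx; ly; lx; ly; ly])))
          (ncs_add (ncs_scale (-2) (mono [:: ly; lx; ly; ly; ly; lx]))
                   (ncs_scale 5 (mono [:: ly; ly; lx; ly; lx; ly]))).

Definition gen_vi : ncs :=
  ncs_add (ncs_scale 2 (mono w1)) (ncs_scale (-5) (mono w2)).

Definition gensI (s : ncs) : Prop :=
     (exists m : word, size m = 8%N /\ s = mono m)
  \/ (exists m : word, (2 < count (pred1 lx) m)%N /\ s = mono m)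
  \/ (exists m : word, size m = 7%N /\ m <> w1 /\ m <> w2 /\ s = mono m)
  \/ (exists m : word, (0 < size m < 7)%N /\ ~ mdivides m w1
                        /\ ~ mdivides m w2 /\ s = mono m)
  \/ s = gen_v
  \/ s = gen_vi.

(* Membership in I, and congruence modulo I (equality in B = A/I). *)
Definition inI (p : ncs) : Prop := in_ideal gensI p.
Definition eqI (p q : ncs) : Prop := inI (ncs_sub p q).

Definition lie (p q : ncs) : ncs := ncs_sub (ncs_mul p q) (ncs_mul q p).
Definition lie_engel (u v : ncs) (n : nat) : ncs := iter n (fun c => lie c v) u.

Definition circ (p q : ncs) : ncs := ncs_add (ncs_add p q) (ncs_mul p q).

(* w represents the inverse of u in the adjoint group of B (identity 0). *)
Definition adj_inv_B (u w : ncs) : Prop :=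
  in_A w /\ eqI (circ u w) ncs_zero /\ eqI (circ w u) ncs_zero.

Definition grp_comm_B (u v c : ncs) : Prop :=
  exists u' v', adj_inv_B u u' /\ adj_inv_B v v' /\
    eqI c (circ (circ (circ u' v') u) v).

Definition lie_B_engel (n : nat) : Prop :=
  forall u v : ncs, in_A u -> in_A v -> inI (lie_engel u v n).

Definition adj_group_B_not_engel (n : nat) : Prop :=
  exists (u v : ncs) (c : nat -> ncs),
    in_A u /\ in_A v /\ c 0%N = u /\
    (forall k, (k < n)%N -> in_A (c k.+1) /\ grp_comm_B (c k) v (c k.+1)) /\
    ~ eqI (c n) ncs_zero.

End FreeAlg.

From mathcomp Require Import all_boot all_order all_algebra.
From mathcomp Require Import zify ring.
From Stdlib Require Import FunctionalExtensionality.
Import GRing.Theory.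
Set Implicit Arguments.
Unset Strict Implicit.
Unset Printing Implicit Defensive.
Local Open Scope ring_scope.

(* Every monomial of A that is not a nonempty factor of w1 = yxy^3xy or w2 = y^2xyxy^2
   lies in I, so modulo I an element of A is determined by its coefficients on these
   28 words.  [u,_5 v] vanishes on the words of length at most 5, and on the six longer
   ones it agrees with an explicit combination of the relations (v) and (vi); hence [B]
   is 5-Engel.  On the other hand, the linear form λ(p) = 5 p(w1) + 2 p(w2) vanishes on
   a g b for every generator g of I and all (possibly empty) monomials a, b (for (vi)
   because 5·2 + 2·(-5) = 0), hence on I.  Computing in the adjoint group with integer
   coefficients (inverses are truncated geometric series), the commutator (x,_5 y) has
   coefficients 0 at w1 and 6 at w2, so λ takes the value 12 on it, which is nonzero
   when the characteristic is neither 2 nor 3. *)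

Fixpoint words_upto (n : nat) : seq word :=
  if n is k.+1 then [::] :: [seq b :: w | b <- [:: lx; ly], w <- words_upto k]
  else [:: [::]].

Lemma cons_inj (b : bool) : injective (cons b). Proof. by move=> ? ? []. Qed.

Lemma mem_words_upto n w : (w \in words_upto n) = (size w <= n)%N.
Proof.
elim: n w => [|n IH] [|b w] //=.
rewrite in_cons /= cats0 mem_cat.
have mem_consb c :
    ((b :: w) \in [seq c :: x | x <- words_upto n]) = (c == b) && (size w <= n)%N.
  case: eqP => [->|ne]; first by rewrite (mem_map (@cons_inj b)) IH.
  by apply/mapP => -[x _ [/esym]].
by rewrite !mem_consb; clear mem_consb; case: b; rewrite /= ?orbF.
Qed.

Lemma uniq_words_upto n : uniq (words_upto n).
Proof.
elim: n => [|n IH] //=; rewrite cats0 cat_uniq !(map_inj_uniq (@cons_inj _)) IH /=.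
apply/and3P; split => //.
- by rewrite mem_cat; apply/norP; split; apply/negP => /mapP [x _].
- by apply/hasP => -[x /mapP [y _ ->] /mapP [z _]].
Qed.

Definition factors (W : word) : seq word :=
  [seq drop i (take j W) | i <- iota 0 (size W).+1, j <- iota 0 (size W).+1].

Lemma mem_factors (W l m r : word) : W = l ++ m ++ r -> m \in factors W.
Proof.
move=> defW; have bound k : (k <= size W)%N -> k \in iota 0 (size W).+1.
  by rewrite mem_iota.
apply/allpairsP; exists (size l, (size l + size m)%N); split => /=.
- by apply: bound; rewrite defW !size_cat; lia.
- by apply: bound; rewrite defW !size_cat; lia.
- by rewrite defW catA take_size_cat ?size_cat // drop_size_cat.
Qed.

Definition spanning_words : seq word :=
  [seq w <- undup (factors w1 ++ factors w2) | w != [::]].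

Lemma uniq_spanning_words : uniq spanning_words.
Proof. by rewrite filter_uniq // undup_uniq. Qed.

Lemma mem_spanning_words m :
  m != [::] -> mdivides m w1 \/ mdivides m w2 -> m \in spanning_words.
Proof.
move=> m_nil; rewrite mem_filter m_nil mem_undup mem_cat.
by case=> -[l [r /mem_factors ->]]; rewrite ?orbT.
Qed.

Section Series.

Variable F : fieldType.
Implicit Types (p q : ncs F).

Lemma sum_split_indicator (w a b : word) :
  \sum_(i < (size w).+1) (((take i w == a)%:R : F) * (drop i w == b)%:R)
  = (w == a ++ b)%:R.
Proof.
have [->|ne] := eqVneq w (a ++ b); last first.
  rewrite big1 // => i _; have [defa|] := eqVneq (take i w) a; last by rewrite mul0r.
  have [defb|] := eqVneq (drop i w) b; last by rewrite mulr0.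
  by move: ne; rewrite -defa -defb cat_take_drop eqxx.
have lt_a : (size a < (size (a ++ b)).+1)%N by rewrite size_cat; lia.
rewrite (bigD1 (Ordinal lt_a)) //= take_size_cat // drop_size_cat // !eqxx mulr1.
rewrite big1 ?addr0 // => -[k lt_k] ne_k /=.
have [defa|] := eqVneq (take k (a ++ b)) a; last by rewrite mul0r.
case/eqP: ne_k; apply/val_inj => /=.
move: lt_k (f_equal size defa); rewrite size_take size_cat.
by case: (ltnP k (size a + size b)) => /= ? ? ?; lia.
Qed.

Lemma mono_cat (a b : word) : mono F (a ++ b) = ncs_mul (mono F a) (mono F b).
Proof. by apply: functional_extensionality => w; rewrite /ncs_mul /mono sum_split_indicator. Qed.

Lemma in_A_mono m : m != [::] -> in_A (mono F m).
Proof.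
move=> m_nil; split; first by rewrite /mono eq_sym (negbTE m_nil).
by exists (size m).+1 => w; rewrite /mono; case: eqP => // ->; rewrite ltnn.
Qed.

Lemma in_A_mul p q : in_A p -> in_A q -> in_A (ncs_mul p q).
Proof.
move=> [p0 [n pn]] [q0 [m qm]]; split.
  by rewrite /ncs_mul big_ord_recl big_ord0 /= p0 mul0r addr0.
exists (n + m)%N => w le_nm; rewrite /ncs_mul big1 // => -[k lt_k] _ /=.
have [lt_kn|le_nk] := ltnP k n; first by rewrite qm ?mulr0 // size_drop; lia.
by rewrite pn ?mul0r // size_take; case: ltnP; lia.
Qed.

Lemma in_A_add p q : in_A p -> in_A q -> in_A (ncs_add p q).
Proof.
move=> [p0 [n pn]] [q0 [m qm]]; split; first by rewrite /ncs_add p0 q0 addr0.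
by exists (n + m)%N => w le_nm; rewrite /ncs_add pn ?qm ?addr0 //; lia.
Qed.

Lemma in_A_scale a p : in_A p -> in_A (ncs_scale a p).
Proof.
move=> [p0 [n pn]]; split; first by rewrite /ncs_scale p0 mulr0.
by exists n => w le_n; rewrite /ncs_scale pn ?mulr0.
Qed.

Lemma in_A_sub p q : in_A p -> in_A q -> in_A (ncs_sub p q).
Proof.
move=> Ap [q0 [n qn]]; apply: in_A_add => //; split; first by rewrite /ncs_opp q0 oppr0.
by exists n => w le_n; rewrite /ncs_opp qn ?oppr0.
Qed.

Definition nsum (s : seq word) (f : word -> ncs F) : ncs F :=
  foldr (fun w acc => ncs_add (f w) acc) (ncs_zero F) s.

Lemma nsumE s (f : word -> ncs F) w : nsum s f w = \sum_(v <- s) f v w.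
Proof. by elim: s => [|v s IH]; rewrite ?big_nil ?big_cons //= /ncs_add IH. Qed.

Lemma inI_nsum s (f : word -> ncs F) :
  (forall w, w \in s -> inI (f w)) -> inI (nsum s f).
Proof.
elim: s => [|v s IH] If /=; first exact: ideal_zero.
apply: ideal_add; first by apply: If; rewrite mem_head.
by apply: IH => w sw; apply: If; rewrite in_cons sw orbT.
Qed.

Lemma ncs_expand p n : (forall w, (n <= size w)%N -> p w = 0) ->
  p = nsum (words_upto n) (fun w => ncs_scale (p w) (mono F w)).
Proof.
move=> pn; apply: functional_extensionality => w; rewrite nsumE /ncs_scale /mono.
under eq_bigr do rewrite eq_sym.
have [le_wn|lt_nw] := leqP (size w) n.
  rewrite (bigD1_seq w) ?uniq_words_upto ?mem_words_upto //= eqxx mulr1 big1 ?addr0 //.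
  by move=> v /negbTE ->; rewrite mulr0.
rewrite pn 1?ltnW // big1_seq // => v /andP [_]; rewrite mem_words_upto => le_vn.
by case: eqP => [eq_wv|]; [rewrite eq_wv leqNgt lt_nw in le_vn | rewrite mulr0].
Qed.

Lemma inI_mono m : m != [::] -> m \notin spanning_words -> inI (mono F m).
Proof.
move=> m_nil m_span.
have [ndiv1 ndiv2] : ~ mdivides m w1 /\ ~ mdivides m w2.
  by split=> div; case/negP: m_span; apply: mem_spanning_words; auto.
have [lt_m8|le_8m] := ltnP (size m) 8.
  have [m7|] := eqVneq (size m) 7.
    have [nw1 nw2] : m <> w1 /\ m <> w2 by split=> defm; move: m_span; rewrite defm.
    by apply: ideal_gen; right; right; left; exists m.
  move=> m_n7; apply: ideal_gen; right; right; right; left; exists m.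
  by rewrite lt0n size_eq0 m_nil ltn_neqAle m_n7 -ltnS lt_m8.
have m8 : size (take 8 m) = 8%N by rewrite size_take; case: ltnP; lia.
have Im8 : inI (mono F (take 8 m)) by apply: ideal_gen; left; exists (take 8 m).
rewrite -(cat_take_drop 8 m); have [->|rest] := eqVneq (drop 8 m) [::]; first by rewrite cats0.
by rewrite mono_cat; apply: ideal_mulr => //; apply: in_A_mono.
Qed.

Lemma inI_vanishing p : in_A p -> {in spanning_words, forall w, p w = 0} -> inI p.
Proof.
move=> [p0 [n pn]] p_span; rewrite (ncs_expand pn); apply: inI_nsum => w _.
have [pw0|pw] := eqVneq (p w) 0.
  have -> : ncs_scale (p w) (mono F w) = ncs_zero F.
    by apply: functional_extensionality => v; rewrite /ncs_scale pw0 mul0r.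
  exact: ideal_zero.
apply/ideal_scale/inI_mono; first by apply: contraNN pw => /eqP ->; rewrite p0.
by apply: contraNN pw => /p_span ->.
Qed.

End Series.

Definition strip (W l r : word) : option word :=
  if [&& (size l + size r <= size W)%N, take (size l) W == l
       & drop (size W - size r) W == r]
  then Some (drop (size l) (take (size W - size r) W)) else None.

Lemma strip_cat W l c r : W = l ++ c ++ r -> strip W l r = Some c.
Proof.
move=> ->; rewrite /strip.
have -> : (size (l ++ c ++ r) - size r = size (l ++ c))%N by rewrite !size_cat; lia.
rewrite take_size_cat // catA drop_size_cat // take_size_cat // drop_size_cat //.
by rewrite !eqxx !andbT !size_cat ifT //; lia.
Qed.

Lemma strip_Some W l r c : strip W l r = Some c -> W = l ++ c ++ r.
Proof.
rewrite /strip; case: ifP => // /and3P [le_lr /eqP defl /eqP defr] [<-].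
have le_l : (size l <= size W - size r)%N by lia.
by rewrite -{1}(cat_take_drop (size W - size r) W)
  -{1}(cat_take_drop (size l) (take (size W - size r) W)) take_takel // defl defr catA.
Qed.

Lemma strip_None W l r c : strip W l r = None -> W <> l ++ c ++ r.
Proof. by move=> sW /strip_cat; rewrite sW. Qed.

Lemma strip_catl W l r c u : strip W l r = Some c ->
  strip W (l ++ u) r = if take (size u) c == u then Some (drop (size u) c) else None.
Proof.
move=> /strip_Some defW; case: eqP => [defu|neu].
  by apply: strip_cat; rewrite defW -{1}(cat_take_drop (size u) c) defu !catA.
case sW: strip => [d|] //; case: neu.
have /strip_cat : W = l ++ (u ++ d) ++ r by rewrite (strip_Some sW) !catA.
by rewrite defW (strip_cat (erefl _)) => -[->]; rewrite take_size_cat.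
Qed.

Lemma strip_catr W l r c u : strip W l r = Some c ->
  strip W l (u ++ r) = if (size u <= size c)%N && (drop (size c - size u) c == u)
                       then Some (take (size c - size u) c) else None.
Proof.
move=> /strip_Some defW; case: ifP => [/andP [_ /eqP defu]|neu].
  by apply: strip_cat; rewrite defW -{1}(cat_take_drop (size c - size u) c) defu !catA.
case sW: strip => [d|] //; move/negP: neu; case.
have /strip_cat : W = l ++ (d ++ u) ++ r by rewrite (strip_Some sW) !catA.
rewrite defW (strip_cat (erefl _)) => -[->]; rewrite size_cat addnK drop_size_cat //.
by rewrite eqxx leq_addl.
Qed.

Lemma strip_catl_None W l r u : strip W l r = None -> strip W (l ++ u) r = None.
Proof.
move=> sW; case sWu: strip => [d|] //; case: (strip_None (c := u ++ d) sW).
by rewrite (strip_Some sWu) !catA.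
Qed.

Lemma strip_catr_None W l r u : strip W l r = None -> strip W l (u ++ r) = None.
Proof.
move=> sW; case sWu: strip => [d|] //; case: (strip_None (c := d ++ u) sW).
by rewrite (strip_Some sWu) !catA.
Qed.

Definition prefixes (W : word) : seq word := [seq take i W | i <- iota 0 (size W).+1].
Definition suffixes (W : word) : seq word := [seq drop i W | i <- iota 0 (size W).+1].

Lemma strip_affixes W l r c : strip W l r = Some c -> l \in prefixes W /\ r \in suffixes W.
Proof.
move=> /strip_Some defW; split; apply/mapP.
  by exists (size l); rewrite ?defW ?take_size_cat // mem_iota !size_cat; lia.
exists (size l + size c)%N; last by rewrite defW catA drop_size_cat ?size_cat.
by rewrite mem_iota defW !size_cat; lia.
Qed.

Lemma perm_prefixes n c : (size c <= n)%N ->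
  perm_eq [seq u <- words_upto n | take (size u) c == u] (prefixes c).
Proof.
move=> le_cn; apply: uniq_perm; first by rewrite filter_uniq ?uniq_words_upto.
  rewrite map_inj_in_uniq ?iota_uniq // => i j.
  rewrite !mem_iota !add0n !ltnS => /andP [_ le_i] /andP [_ le_j] /(f_equal size).
  by rewrite !size_takel.
move=> u; rewrite mem_filter mem_words_upto; apply/andP/mapP => [[/eqP defu _]|[i lt_i ->]].
  exists (size u); last by rewrite defu.
  by rewrite mem_iota add0n ltnS -defu size_take_min geq_minr.
move: lt_i; rewrite mem_iota add0n ltnS => /andP [_ le_i].
by rewrite size_takel // eqxx (leq_trans le_i le_cn).
Qed.

Lemma perm_suffixes n c : (size c <= n)%N ->
  perm_eq [seq u <- words_upto n | (size u <= size c)%N && (drop (size c - size u) c == u)]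
          (suffixes c).
Proof.
move=> le_cn; apply: uniq_perm; first by rewrite filter_uniq ?uniq_words_upto.
  rewrite map_inj_in_uniq ?iota_uniq // => i j.
  rewrite !mem_iota !add0n !ltnS => /andP [_ le_i] /andP [_ le_j] /(f_equal size).
  by rewrite !size_drop => /eqP; rewrite eqn_sub2lE // => /eqP.
move=> u; rewrite mem_filter mem_words_upto.
apply/andP/mapP => [[/andP [le_u /eqP defu] _]|[i lt_i ->]].
  exists (size c - size u)%N; last by rewrite defu.
  by rewrite mem_iota add0n ltnS leq_subr.
move: lt_i; rewrite mem_iota add0n ltnS => /andP [_ le_i].
by rewrite size_drop subKn // eqxx leq_subr (leq_trans (leq_subr _ _) le_cn).
Qed.

Section Sandwich.

Variable F : fieldType.
Implicit Types (p q a : ncs F).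

(* The coefficient of W in l q r. *)
Definition coef_between (W : word) q (l r : word) : F :=
  if strip W l r is Some c then q c else 0.

Lemma coef_between_mull n W a q l r : (size W <= n)%N ->
  coef_between W (ncs_mul a q) l r
  = \sum_(u <- words_upto n) a u * coef_between W q (l ++ u) r.
Proof.
move=> le_Wn; rewrite /coef_between; case sW: (strip W l r) => [c|]; last first.
  by rewrite big1 // => u _; rewrite strip_catl_None ?mulr0.
have le_cW : (size c <= n)%N by move: le_Wn; rewrite (strip_Some sW) !size_cat; lia.
under eq_bigr => u _ do
  rewrite (strip_catl _ sW) (fun_if (fun o => a u * if o is Some d then q d else 0)) mulr0.
rewrite -big_mkcond -big_filter (perm_big _ (perm_prefixes le_cW)) big_map /ncs_mul /=.
rewrite -(big_mkord xpredT (fun i => a (take i c) * q (drop i c))).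
apply: eq_big_seq => i; rewrite mem_iota subn0 add0n ltnS => /andP [_ le_i].
by rewrite size_takel.
Qed.

Lemma coef_between_mulr n W a q l r : (size W <= n)%N ->
  coef_between W (ncs_mul q a) l r
  = \sum_(u <- words_upto n) a u * coef_between W q l (u ++ r).
Proof.
move=> le_Wn; rewrite /coef_between; case sW: (strip W l r) => [c|]; last first.
  by rewrite big1 // => u _; rewrite strip_catr_None ?mulr0.
have le_cW : (size c <= n)%N by move: le_Wn; rewrite (strip_Some sW) !size_cat; lia.
under eq_bigr => u _ do
  rewrite (strip_catr _ sW) (fun_if (fun o => a u * if o is Some d then q d else 0)) mulr0.
rewrite -big_mkcond -big_filter (perm_big _ (perm_suffixes le_cW)) big_map /ncs_mul /=.
rewrite -(big_mkord xpredT (fun i => q (take i c) * a (drop i c))).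
apply: eq_big_seq => i; rewrite mem_iota subn0 add0n ltnS => /andP [_ le_i].
by rewrite size_drop subKn // mulrC.
Qed.


Lemma coef_betweenD W p q l r :
  coef_between W (ncs_add p q) l r = coef_between W p l r + coef_between W q l r.
Proof. by rewrite /coef_between; case: strip; rewrite ?addr0. Qed.

Lemma coef_betweenZ W k p l r : coef_between W (ncs_scale k p) l r = k * coef_between W p l r.
Proof. by rewrite /coef_between; case: strip; rewrite ?mulr0. Qed.

Lemma coef_between_mono W m l r : ~ mdivides m W -> coef_between W (mono F m) l r = 0.
Proof.
rewrite /coef_between /mono => ndiv; case sW: strip => [c|] //.
by case: eqP => // defc; case: ndiv; exists l, r; rewrite -defc (strip_Some sW).
Qed.

End Sandwich.

Lemma coef_between_nil (F : fieldType) W (q : ncs F) : coef_between W q [::] [::] = q W.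
Proof. by rewrite /coef_between (@strip_cat W [::] W [::]) ?cats0. Qed.

Lemma mdivides_size m W : mdivides m W -> (size m <= size W)%N.
Proof. by move=> [l [r ->]]; rewrite !size_cat; lia. Qed.

Lemma mdivides_count P m W : mdivides m W -> (count P m <= count P W)%N.
Proof. by move=> [l [r ->]]; rewrite !count_cat; lia. Qed.

Lemma mdivides_size_eq m W : mdivides m W -> size m = size W -> m = W.
Proof.
move=> [[|? l] [[|? r] ->]] //=; rewrite ?cats0 // !size_cat /=; lia.
Qed.

Ltac case_members :=
  repeat match goal with H : is_true (_ || _) |- _ => case/orP: H => H end;
  repeat match goal with H : is_true (_ == _) |- _ => move/eqP: H => H; subst end.

Section LinearForm.

Variable F : fieldType.
Implicit Types (p q a : ncs F).

(* [lam q l r] is λ(l q r) for the linear form λ(p) = 5 p(w1) + 2 p(w2). *)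
Definition lam q (l r : word) : F :=
  5 * coef_between w1 q l r + 2 * coef_between w2 q l r.

Definition lam_null q : Prop := forall l r, lam q l r = 0.

Lemma lam_null_mull a q : lam_null q -> lam_null (ncs_mul a q).
Proof.
move=> q0 l r; rewrite /lam !(coef_between_mull (n := 7)) // !mulr_sumr -big_split /=.
rewrite big1 // => u _; move: (q0 (l ++ u) r); rewrite /lam => lam0.
by rewrite [5 * _]mulrCA [2 * _]mulrCA -mulrDr lam0 mulr0.
Qed.

Lemma lam_null_mulr a q : lam_null q -> lam_null (ncs_mul q a).
Proof.
move=> q0 l r; rewrite /lam !(coef_between_mulr (n := 7)) // !mulr_sumr -big_split /=.
rewrite big1 // => u _; move: (q0 l (u ++ r)); rewrite /lam => lam0.
by rewrite [5 * _]mulrCA [2 * _]mulrCA -mulrDr lam0 mulr0.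
Qed.

Lemma lam_null_add p q : lam_null p -> lam_null q -> lam_null (ncs_add p q).
Proof.
move=> p0 q0 l r; move: (p0 l r) (q0 l r); rewrite /lam !coef_betweenD => pl ql.
by rewrite !mulrDr addrACA pl ql addr0.
Qed.

Lemma lam_null_scale k p : lam_null p -> lam_null (ncs_scale k p).
Proof.
move=> p0 l r; rewrite /lam !coef_betweenZ [5 * _]mulrCA [2 * _]mulrCA -mulrDr.
by have := p0 l r; rewrite /lam => ->; rewrite mulr0.
Qed.

Lemma lam_null_zero : lam_null (ncs_zero F).
Proof.
by move=> l r; rewrite /lam /coef_between; case: strip; case: strip; rewrite /ncs_zero ?mulr0 ?addr0.
Qed.

Lemma lam_null_mono m : ~ mdivides m w1 -> ~ mdivides m w2 -> lam_null (mono F m).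
Proof. by move=> n1 n2 l r; rewrite /lam !coef_between_mono // !mulr0 addr0. Qed.

Lemma lam_null_affixes q :
  (forall l r, l \in prefixes w1 -> r \in suffixes w1 -> lam q l r = 0) ->
  (forall l r, l \in prefixes w2 -> r \in suffixes w2 -> lam q l r = 0) ->
  lam_null q.
Proof.
move=> q1 q2 l r; case s1: (strip w1 l r) => [c|].
  by have [] := strip_affixes s1; apply: q1.
case s2: (strip w2 l r) => [c|].
  by have [] := strip_affixes s2; apply: q2.
by rewrite /lam /coef_between s1 s2 !mulr0 addr0.
Qed.

Lemma lam_null_gen_v : lam_null (gen_v F).
Proof.
apply: lam_null_affixes => l r; rewrite /= !inE => ? ?; case_members;
  rewrite /lam /coef_between /= /gen_v /ncs_add /ncs_scale /mono /=; ring.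
Qed.

Lemma lam_null_gen_vi : lam_null (gen_vi F).
Proof.
apply: lam_null_affixes => l r; rewrite /= !inE => ? ?; case_members;
  rewrite /lam /coef_between /= /gen_vi /ncs_add /ncs_scale /mono /=; ring.
Qed.

Lemma lam_null_gensI s : gensI s -> lam_null s.
Proof.
case=> [[m [m8 ->]]|[[m [mx ->]]|[[m [m7 [m1 [m2 ->]]]]|[[m [_ [n1 [n2 ->]]]]|[->|->]]]]].
- by apply: lam_null_mono => /mdivides_size; rewrite m8.
- by apply: lam_null_mono => /(mdivides_count (pred1 lx)) /(leq_trans mx).
- by apply: lam_null_mono => /mdivides_size_eq; rewrite m7 => /(_ erefl).
- exact: lam_null_mono.
- exact: lam_null_gen_v.
- exact: lam_null_gen_vi.
Qed.

Lemma inI_lam_null p : inI p -> lam_null p.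
Proof.
elim=> {p} [s /lam_null_gensI //||p q _ p0 _ q0|k p _ p0|a p _ _ p0|p a _ _ p0].
- exact: lam_null_zero.
- exact: lam_null_add.
- exact: lam_null_scale.
- exact: lam_null_mull.
- exact: lam_null_mulr.
Qed.

End LinearForm.

Definition long_spanning_words : seq word :=
  [:: [:: ly; lx; ly; ly; ly; lx]; w1; [:: lx; ly; ly; ly; lx; ly];
      [:: ly; ly; lx; ly; lx; ly]; w2; [:: ly; lx; ly; lx; ly; ly]].

Lemma long_spanning_wordsE : [seq w <- spanning_words | (5 < size w)%N] = long_spanning_words.
Proof. by vm_compute. Qed.

#[local] Arguments lie_engel : simpl never.

Section LieEngel.

Variable F : fieldType.
Variables u v : ncs F.
Hypotheses (Au : in_A u) (Av : in_A v).


Lemma lie_engelSE k w : lie_engel u v k.+1 w = \sum_(i < (size w).+1)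
  (lie_engel u v k (take i w) * v (drop i w) - v (take i w) * lie_engel u v k (drop i w)).
Proof. by rewrite /lie_engel iterS /lie /ncs_sub /ncs_add /ncs_opp /ncs_mul -sumrB. Qed.

Lemma ncs_mul_order (p q : ncs F) n m :
  (forall w, (size w < n)%N -> p w = 0) -> (forall w, (size w < m)%N -> q w = 0) ->
  forall w, (size w < n + m)%N -> ncs_mul p q w = 0.
Proof.
move=> pn qm w lt_w; rewrite /ncs_mul big1 // => -[k lt_k] _ /=.
have [lt_kn|le_nk] := ltnP k n; first by rewrite pn ?mul0r // size_take_min gtn_min lt_kn.
by rewrite qm ?mulr0 // size_drop; lia.
Qed.

Lemma lie_engel_order k w : (size w <= k)%N -> lie_engel u v k w = 0.
Proof.
case: Au Av => u0 _ [v0 _]; elim: k w => [|k IH] w le_wk; first by case: w le_wk.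
have v1 w' : (size w' < 1)%N -> v w' = 0 by case: w'.
rewrite /lie_engel iterS -/(lie_engel u v k) /lie /ncs_sub /ncs_add /ncs_opp.
by rewrite (ncs_mul_order (n := k.+1) IH v1) ?(ncs_mul_order (m := k.+1) v1 IH)
  ?oppr0 ?addr0 ?addn1.
Qed.

Lemma in_A_lie_engel k : in_A (lie_engel u v k).
Proof.
elim: k => [|k IH] //; rewrite /lie_engel iterS -/(lie_engel u v k).
by apply: in_A_sub; apply: in_A_mul.
Qed.

Lemma sum_window n (P : pred nat) (f : nat -> F) :
  (forall i, (i <= n)%N -> ~~ P i -> f i = 0) ->
  \sum_(i < n.+1) f i = \sum_(i <- [seq i <- iota 0 n.+1 | P i]) f i.
Proof.
move=> f0; rewrite big_filter -(big_mkord xpredT) /index_iota subn0 (big_mkcond P).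
apply: eq_big_seq => i; rewrite mem_iota add0n ltnS => /andP [_ le_in].
by case: ifP => // /negbT /(f0 i le_in).
Qed.

(* [u,_k v] vanishes on words of length at most k and v on the empty word, so only these
   splittings contribute; once w is concrete, the index lists compute to short lists. *)
Lemma lie_engelSE_window k w :
  lie_engel u v k.+1 w =
    \sum_(i <- [seq i <- iota 0 (size w).+1 | (k < i < size w)%N])
        (lie_engel u v k (take i w) * v (drop i w))
  - \sum_(i <- [seq i <- iota 0 (size w).+1 | (0 < i < size w - k)%N])
        (v (take i w) * lie_engel u v k (drop i w)).
Proof.
have v0 : v [::] = 0 by case: Av.
rewrite lie_engelSE sumrB; congr (_ - _); apply: sum_window => i le_iw /negP out.
  have [le_ik|lt_ki] := leqP i k.
    by rewrite lie_engel_order ?mul0r // size_take_min geq_min le_ik.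
  have -> : i = size w.
    by apply/eqP; rewrite eqn_leq le_iw leqNgt; apply/negP => lt_iw; apply: out; rewrite lt_ki lt_iw.
  by rewrite drop_size v0 mulr0.
have [->|i0] := eqVneq i 0; first by rewrite take0 v0 mul0r.
rewrite lie_engel_order ?mulr0 // size_drop leqNgt; apply/negP => lt_k; apply: out.
by rewrite lt0n i0 /=; move: lt_k le_iw; lia.
Qed.

End LieEngel.

Lemma in_A_gen_v (F : fieldType) : in_A (gen_v F).
Proof. by rewrite /gen_v; do 2 apply: in_A_add; apply: in_A_scale; apply: in_A_mono. Qed.

Lemma in_A_gen_vi (F : fieldType) : in_A (gen_vi F).
Proof. by rewrite /gen_vi; apply: in_A_add; apply: in_A_scale; apply: in_A_mono. Qed.

Section LieEngel5.

Variable F : fieldType.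
Variables u v : ncs F.
Hypotheses (Au : in_A u) (Av : in_A v).

Let ux := u [:: lx]. Let uy := u [:: ly].
Let vx := v [:: lx]. Let vy := v [:: ly].

(* Coefficients read off by comparing with [u,_5 v] on the six spanning words of
   length >= 6. *)
Definition engel5_corr : ncs F :=
  ncs_add
    (ncs_scale (3 * (ux * vx * vy ^+ 4 - uy * vx ^+ 2 * vy ^+ 3)) (gen_v F))
    (ncs_scale (3 * (uy * vx * vy ^+ 3 * (v [:: lx; ly] - v [:: ly; lx])
                     + vx * vy ^+ 4 * (u [:: ly; lx] - u [:: lx; ly]))) (gen_vi F)).

Lemma inI_engel5_corr : inI engel5_corr.
Proof.
apply: ideal_add; apply/ideal_scale/ideal_gen; first by do 4!right; left.
by do 5!right.
Qed.

Lemma mono_short m w : (size w < size m)%N -> mono F m w = 0.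
Proof. by rewrite /mono; case: eqP => // ->; rewrite ltnn. Qed.

Ltac expand_engel :=
  repeat (rewrite (lie_engelSE_window Au Av) /= ?big_cons ?big_nil);
  rewrite -?[lie_engel u v 0 _]/(u _).

Lemma lie_engel5_spanning : {in spanning_words, lie_engel u v 5 =1 engel5_corr}.
Proof.
move=> w w_span; have [short|long] := leqP (size w) 5.
  rewrite lie_engel_order // /engel5_corr /ncs_add /ncs_scale /gen_v /gen_vi /ncs_add /ncs_scale.
  have mono0 m : (5 < size m)%N -> mono F m w = 0.
    by move=> lt5m; apply: mono_short; apply: leq_ltn_trans short lt5m.
  by rewrite !mono0 //; ring.
have : w \in long_spanning_words by rewrite -long_spanning_wordsE mem_filter long.
rewrite !inE => w_long; case_members;
  rewrite /engel5_corr /ncs_add /ncs_scale /gen_v /gen_vi /ncs_add /ncs_scale /mono /=;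
  expand_engel; rewrite /ux /uy /vx /vy; ring.
Qed.

End LieEngel5.

Lemma lie_B_engel5 (F : fieldType) : lie_B_engel F 5.
Proof.
move=> u v Au Av; set c := engel5_corr u v.
have -> : lie_engel u v 5 = ncs_add (ncs_sub (lie_engel u v 5) c) c.
  by apply: functional_extensionality => w; rewrite /ncs_sub /ncs_add /ncs_opp addrNK.
apply: ideal_add; last exact: inI_engel5_corr.
apply: inI_vanishing => [|w w_span].
  apply: in_A_sub; first exact: in_A_lie_engel.
  by apply: in_A_add; apply: in_A_scale; [apply: in_A_gen_v | apply: in_A_gen_vi].
by rewrite /ncs_sub /ncs_add /ncs_opp lie_engel5_spanning ?subrr.
Qed.

Section Congruence.

Variable F : fieldType.
Implicit Types (p q a b : ncs F).

Lemma eqI_refl p : eqI p p.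
Proof.
rewrite /eqI; have -> : ncs_sub p p = ncs_zero F.
  by apply: functional_extensionality => w; rewrite /ncs_sub /ncs_add /ncs_opp subrr.
exact: ideal_zero.
Qed.

Lemma eqI_sym p q : eqI p q -> eqI q p.
Proof.
rewrite /eqI => pq; have -> : ncs_sub q p = ncs_scale (-1) (ncs_sub p q).
  by apply: functional_extensionality => w; rewrite /ncs_sub /ncs_add /ncs_opp /ncs_scale; ring.
exact: ideal_scale.
Qed.

Lemma eqI_trans p q r : eqI p q -> eqI q r -> eqI p r.
Proof.
rewrite /eqI => pq qr; have -> : ncs_sub p r = ncs_add (ncs_sub p q) (ncs_sub q r).
  by apply: functional_extensionality => w; rewrite /ncs_sub /ncs_add /ncs_opp; ring.
exact: ideal_add.
Qed.

Lemma eqI_circl a a' b : in_A b -> eqI a a' -> eqI (circ a b) (circ a' b).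
Proof.
rewrite /eqI => Ab aa'.
have -> : ncs_sub (circ a b) (circ a' b) = ncs_add (ncs_sub a a') (ncs_mul (ncs_sub a a') b).
  apply: functional_extensionality => w; rewrite /ncs_sub /ncs_add /ncs_opp /circ /ncs_mul /ncs_add.
  rewrite [in RHS](eq_bigr (fun i : 'I_(size w).+1 =>
    a (take i w) * b (drop i w) - a' (take i w) * b (drop i w))).
    by rewrite sumrB; ring.
  by move=> i _; ring.
by apply: ideal_add => //; apply: ideal_mulr.
Qed.

End Congruence.

(* Polynomials with integer coefficients as lists of terms (repetitions allowed): exact
   certificates that [vm_compute] can evaluate. *)
Definition zpoly := seq (word * int).

Definition zcoef (w : word) (p : zpoly) : int :=
  foldr (fun e c => if e.1 == w then e.2 + c else c) 0 p.

Definition ncs_of (F : fieldType) (p : zpoly) : ncs F :=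
  fun w => \sum_(e <- p) ((e.1 == w)%:R * e.2%:~R).

Definition zmul (p q : zpoly) : zpoly := [seq (e.1 ++ f.1, e.2 * f.2) | e <- p, f <- q].
Definition zopp (p : zpoly) : zpoly := [seq (e.1, - e.2) | e <- p].
Definition zcirc (p q : zpoly) : zpoly := p ++ q ++ zmul p q.
Definition ztrunc (p : zpoly) : zpoly := [seq (w, zcoef w p) | w <- spanning_words].
Definition augmented (p : zpoly) : bool := all (fun e => e.1 != [::]) p.
Definition zero_coefs (p : zpoly) : bool := all (fun e => e.2 == 0) p.

Section ZPoly.

Variable F : fieldType.
Implicit Types p q : zpoly.

Lemma ncs_ofE p w : ncs_of F p w = (zcoef w p)%:~R.
Proof.
elim: p => [|e p IH]; first by rewrite /ncs_of big_nil.
rewrite /ncs_of big_cons -/(ncs_of F p w) IH /=.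
by case: eqP => _; rewrite ?intrD ?mul1r ?mul0r ?add0r.
Qed.

Lemma ncs_of_cat p q : ncs_of F (p ++ q) = ncs_add (ncs_of F p) (ncs_of F q).
Proof. by apply: functional_extensionality => w; rewrite /ncs_of big_cat. Qed.

Lemma ncs_of_mul p q : ncs_of F (zmul p q) = ncs_mul (ncs_of F p) (ncs_of F q).
Proof.
apply: functional_extensionality => w; rewrite /ncs_of /ncs_mul big_allpairs_dep /=.
symmetry; transitivity (\sum_(i < (size w).+1) \sum_(e <- p) \sum_(f <- q)
    ((e.1 == take i w)%:R * e.2%:~R * ((f.1 == drop i w)%:R * f.2%:~R)) : F).
  by apply: eq_bigr => i _; rewrite mulr_suml; apply: eq_bigr => e _; rewrite mulr_sumr.
rewrite exchange_big; apply: eq_bigr => e _; rewrite exchange_big; apply: eq_bigr => f _.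
rewrite intrM [_ ++ _ == w]eq_sym -(sum_split_indicator F w e.1 f.1) mulr_suml.
by apply: eq_bigr => i _; rewrite (eq_sym (take _ _)) (eq_sym (drop _ _)); ring.
Qed.

Lemma ncs_of_circ p q : ncs_of F (zcirc p q) = circ (ncs_of F p) (ncs_of F q).
Proof.
rewrite /zcirc !ncs_of_cat ncs_of_mul /circ.
by apply: functional_extensionality => w; rewrite /ncs_add addrA.
Qed.

Lemma ncs_of_trunc p w :
  ncs_of F (ztrunc p) w = if w \in spanning_words then ncs_of F p w else 0.
Proof.
rewrite /ncs_of /ztrunc big_map /=; case: ifP => w_span.
  rewrite (bigD1_seq w) ?uniq_spanning_words //= eqxx mul1r big1 ?addr0 -?ncs_ofE //.
  by move=> v /negbTE ->; rewrite mul0r.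
rewrite big1_seq // => v /andP [_ v_span].
by case: eqP => [defv|]; [rewrite -defv v_span in w_span | rewrite mul0r].
Qed.

Lemma in_A_ncs_of p : augmented p -> in_A (ncs_of F p).
Proof.
move=> /allP p_aug; split.
  by rewrite /ncs_of big1_seq // => e /andP [_ /p_aug /negbTE ->]; rewrite mul0r.
exists (\max_(e <- p) size e.1).+1 => w lt_w; rewrite /ncs_of big1_seq // => e /andP [_ pe].
case: eqP => [defe|]; last by rewrite mul0r.
by move: lt_w; rewrite -defe ltnNge (bigmax_sup_seq _ pe).
Qed.

Lemma ncs_of_zero_coefs p : zero_coefs p -> ncs_of F p = ncs_zero F.
Proof.
move=> /allP p0; apply: functional_extensionality => w.
by rewrite /ncs_of big1_seq // => e /andP [_ /p0 /eqP ->]; rewrite mulr0.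
Qed.

Lemma augmented_trunc p : augmented (ztrunc p).
Proof.
by rewrite /augmented all_map; apply/allP => w; rewrite /= mem_filter => /andP [].
Qed.

Lemma augmented_circ p q : augmented p -> augmented q -> augmented (zcirc p q).
Proof.
move=> p_aug q_aug; rewrite /zcirc /augmented !all_cat -!/(augmented _) p_aug q_aug.
apply/allP => _ /allpairsP [[e f] [pe _ ->]] /=; move/allP: p_aug => /(_ e pe).
by rewrite -!size_eq0 size_cat; case: (size e.1).
Qed.

Lemma eqI_trunc p : augmented p -> eqI (ncs_of F (ztrunc p)) (ncs_of F p).
Proof.
move=> p_aug; apply: inI_vanishing => [|w w_span].
  by apply: in_A_sub; apply: in_A_ncs_of; rewrite ?augmented_trunc.
by rewrite /ncs_sub /ncs_add /ncs_opp ncs_of_trunc w_span subrr.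
Qed.

Lemma eqI0_trunc p : augmented p -> zero_coefs (ztrunc p) -> eqI (ncs_of F p) (ncs_zero F).
Proof.
move=> p_aug p0; apply: eqI_trans (eqI_sym (eqI_trunc p_aug)) _.
by rewrite ncs_of_zero_coefs //; apply: eqI_refl.
Qed.

End ZPoly.

Fixpoint zgeom (n : nat) (m p : zpoly) : zpoly :=
  if n is k.+1 then ztrunc (p ++ zgeom k m (ztrunc (zmul p m))) else ztrunc p.

(* (-C) + (-C)^2 + ... + (-C)^7, the adjoint inverse of C as B^8 = 0; rather than proving
   this in general, [zadj_inv_ok] checks it for each polynomial where it is used. *)
Definition zadj_inv (C : zpoly) : zpoly := let m := ztrunc (zopp C) in zgeom 6 m m.

Definition zadj_inv_ok (C : zpoly) : bool :=
  zero_coefs (ztrunc (zcirc C (zadj_inv C))) && zero_coefs (ztrunc (zcirc (zadj_inv C) C)).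

Definition zcomm (C D : zpoly) : zpoly :=
  ztrunc (zcirc (ztrunc (zcirc (ztrunc (zcirc (zadj_inv C) (zadj_inv D))) C)) D).

Lemma augmented_zadj_inv C : augmented (zadj_inv C).
Proof. exact: augmented_trunc. Qed.

Section AdjointGroup.

Variable F : fieldType.

Lemma adj_inv_B_zadj_inv C : augmented C -> zadj_inv_ok C ->
  adj_inv_B (ncs_of F C) (ncs_of F (zadj_inv C)).
Proof.
move=> C_aug /andP [CC' C'C]; split; first exact/in_A_ncs_of/augmented_zadj_inv.
by split; rewrite -ncs_of_circ; apply: eqI0_trunc => //;
  apply: augmented_circ => //; apply: augmented_zadj_inv.
Qed.

Lemma grp_comm_B_zcomm C D : augmented C -> augmented D -> zadj_inv_ok C -> zadj_inv_ok D ->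
  grp_comm_B (ncs_of F C) (ncs_of F D) (ncs_of F (zcomm C D)).
Proof.
move=> C_aug D_aug C_ok D_ok.
exists (ncs_of F (zadj_inv C)), (ncs_of F (zadj_inv D)).
split; first exact: adj_inv_B_zadj_inv.
split; first exact: adj_inv_B_zadj_inv.
have aug_circ_trunc p q : augmented q -> augmented (zcirc (ztrunc p) q).
  by move=> ?; apply: augmented_circ; rewrite ?augmented_trunc.
apply: eqI_trans (eqI_trunc _ (aug_circ_trunc _ _ D_aug)) _.
rewrite ncs_of_circ; apply: eqI_circl; first exact: in_A_ncs_of.
apply: eqI_trans (eqI_trunc _ (aug_circ_trunc _ _ C_aug)) _.
rewrite ncs_of_circ; apply: eqI_circl; first exact: in_A_ncs_of.
rewrite -ncs_of_circ; apply: eqI_trunc.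
by apply: augmented_circ; apply: augmented_zadj_inv.
Qed.

End AdjointGroup.

Definition zx : zpoly := [:: ([:: lx], 1%Z)].
Definition zy : zpoly := [:: ([:: ly], 1%Z)].

Definition engel_chain (k : nat) : zpoly := iter k (zcomm ^~ zy) zx.

Lemma augmented_engel_chain k : augmented (engel_chain k).
Proof. by case: k => // k; rewrite /engel_chain iterS; apply: augmented_trunc. Qed.

Lemma zadj_inv_ok_engel_chain k : (k < 5)%N -> zadj_inv_ok (engel_chain k).
Proof. by case: k => [|[|[|[|[|k]]]]] lt_k5; [vm_compute..|]. Qed.

Lemma zadj_inv_ok_zy : zadj_inv_ok zy.
Proof. by vm_compute. Qed.

Lemma zcoef_w1_engel_chain5 : zcoef w1 (engel_chain 5) = 0%Z.
Proof. by vm_compute. Qed.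

Lemma zcoef_w2_engel_chain5 : zcoef w2 (engel_chain 5) = 6%Z.
Proof. by vm_compute. Qed.

Lemma adj_group_B_not_engel5 (F : fieldType) :
  (2%N \notin [pchar F]) -> (3%N \notin [pchar F]) -> adj_group_B_not_engel F 5.
Proof.
move=> F2 F3; exists (ncs_of F zx), (ncs_of F zy), (fun k => ncs_of F (engel_chain k)).
split; first exact: in_A_ncs_of.
split; first exact: in_A_ncs_of.
split; first by [].
split=> [k lt_k5|/inI_lam_null /(_ [::] [::])].
  split; first exact/in_A_ncs_of/augmented_engel_chain.
  rewrite /engel_chain iterS; apply: grp_comm_B_zcomm.
  - exact: augmented_engel_chain.
  - by [].
  - exact: zadj_inv_ok_engel_chain.
  - exact: zadj_inv_ok_zy.
rewrite /lam !coef_between_nil /ncs_sub /ncs_add /ncs_opp /ncs_zero !ncs_ofE.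
rewrite zcoef_w1_engel_chain5 zcoef_w2_engel_chain5 !subr0 mulr0 add0r => /eqP; apply/negP.
have charF_neq0 p : prime p -> p \notin [pchar F] -> p%:R != 0 :> F.
  by move=> p_pr; apply: contra => p0; rewrite inE /= p_pr p0.
rewrite -[6%Z%:~R]/((2 * 3)%:R : F) natrM !mulf_neq0 // charF_neq0.
Qed.

Theorem theorem1p2 (F : fieldType) :
  (2%N \notin [pchar F]%R) -> (3%N \notin [pchar F]%R) ->
  lie_B_engel F 5 /\ adj_group_B_not_engel F 5.
Proof. by move=> F2 F3; split; [exact: lie_B_engel5 | exact: adj_group_B_not_engel5]. Qed.
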